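(* Let $n\ge3$ and let $k\ne\mathbb{F}_2$ be a field. Let $S=k[x_{i,j}]_{i,j=1}^n$ and $f=\sum_{\sigma\in S_n}a_\sigma x_{1,\sigma(1)}\cdots x_{n,\sigma(n)}$ with all $a_\sigma\in k^*$. Then $f$ is not a direct sum.
   Context: A form $f$ in a polynomial ring over $k$ is a direct sum if, after an invertible linear change of the variables, it can be written as $f_1+f_2$ with $f_1,f_2$ nonzero forms in disjoint sets of the new variables. *)

From HB Require Import structures.
From mathcomp Require Import all_boot all_order all_algebra all_fingroup.
From mathcomp Require Import mpoly.
Set Implicit Arguments. Unset Strict Implicit. Unset Printing Implicit Defensive.
Import GRing.Theory.
Local Open Scope ring_scope.

(* Variables of the polynomial ring k[x_{i,j}]_{i,j} are indexed by 'I_(n*n);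
   the variable x_{i,j} is 'X_(mxvec_index i j). *)
Definition xvar (n : nat) (i j : 'I_n) : 'I_(n * n) := mxvec_index i j.

Definition lin_subst (k : fieldType) (N : nat) (A : 'M[k]_N)
  : N.-tuple {mpoly k[N]} :=
  [tuple \sum_(j < N) A i j *: 'X_j | i < N].

Definition only_vars (k : fieldType) (N : nat) (V : {set 'I_N}) (p : {mpoly k[N]}) : Prop :=
  forall m, m \in msupp p -> forall i, i \notin V -> m i = 0%N.

Definition is_direct_sum (k : fieldType) (N : nat) (f : {mpoly k[N]}) : Prop :=
  exists A : 'M[k]_N, A \in unitmx /\
  exists (f1 f2 : {mpoly k[N]}) (V : {set 'I_N}),
    f1 != 0 /\ f2 != 0 /\ f1 \is homog mdeg /\ f2 \is homog mdeg /\
    only_vars V f1 /\ only_vars (~: V) f2 /\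
    f \mPo lin_subst A = f1 + f2.

Definition perm_form (k : fieldType) (n : nat) (a : 'S_n -> k) : {mpoly k[n * n]} :=
  \sum_(s : 'S_n) a s *: \prod_(i < n) 'X_(xvar i (s i)).

From HB Require Import structures.
From mathcomp Require Import all_boot all_order all_algebra all_fingroup.
From mathcomp Require Import mpoly.
Set Implicit Arguments. Unset Strict Implicit. Unset Printing Implicit Defensive.
Import GRing.Theory.
Local Open Scope ring_scope.

(* If f(A y) = f1(y_V) + f2(y_W) with W the complement of V, every mixed second
   derivative of f(A y) across V and W vanishes, so each coefficient H of the Hessian of
   f satisfies P^T H = H P for the idempotent P = A D_V A^-1, D_V the 0/1 diagonal
   matrix of V. Homogeneity of f1, f2 and f(0) = 0 force V and W to be nonempty, so P is
   not scalar. For the permanent-like form no such P exists: at the monomial of a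
   permutation s with the rows i, k removed, the only nonzero Hessian entry in the column
   of x_{k,s(k)} is the one in the row of x_{i,s(i)}, equal to a_s, and comparing the two
   sides of P^T H = H P (with a third row and column, available since n >= 3) shows that
   P is scalar. *)


Section LinearSubstitution.
Variables (k : fieldType) (N : nat).
Implicit Types (p q : {mpoly k[N]}) (A : 'M[k]_N).

Lemma mpoly_ring_ind (P : {mpoly k[N]} -> Prop) :
  (forall c, P c%:MP) -> (forall i, P 'X_i) ->
  (forall p q, P p -> P q -> P (p + q)) ->
  (forall p q, P p -> P q -> P (p * q)) -> forall p, P p.
Proof.
move=> PC PX PD PM p; rewrite [p]mpolyE.
apply: big_ind => [|//|m _]; first by rewrite -mpolyC0.
rewrite -mul_mpolyC mpolyXE_id; apply: (PM) => //.
apply: big_ind => [|//|i _]; first by rewrite -mpolyC1.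
elim: (m i) => [|e IHe]; first by rewrite expr0 -mpolyC1.
by rewrite exprS; apply: (PM).
Qed.

Lemma mderivXU (i j : 'I_N) : ('X_i : {mpoly k[N]})^`M(j) = ((i == j)%:R)%:MP.
Proof.
rewrite mderivX mnm1E; have [->|_] := eqVneq i j; last by rewrite scale0r mpolyC0.
by rewrite -[X in (X - _)%MM]add0m addmK mpolyX0 scale1r mpolyC1.
Qed.

Lemma lin_substXU A i : 'X_i \mPo lin_subst A = \sum_(j < N) A i j *: 'X_j.
Proof. by rewrite comp_mpolyXU -tnth_nth tnth_mktuple. Qed.

Lemma comp_mpolyA p (lq lr : N.-tuple {mpoly k[N]}) :
  (p \mPo lq) \mPo lr = p \mPo [tuple tnth lq i \mPo lr | i < N].
Proof.
elim/mpoly_ring_ind: p => [c|i|p q IHp IHq|p q IHp IHq].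
- by rewrite !comp_mpolyC.
- by rewrite !comp_mpolyXU -!tnth_nth tnth_mktuple.
- by rewrite !comp_mpolyD IHp IHq.
- by rewrite !rmorphM /= IHp IHq.
Qed.

Lemma lin_substK A : A \in unitmx ->
  cancel (comp_mpoly (lin_subst A)) (comp_mpoly (lin_subst (invmx A))).
Proof.
move=> uA p; rewrite /= comp_mpolyA -[RHS]comp_mpoly_id; congr (p \mPo _).
apply: eq_from_tnth => i; rewrite !tnth_mktuple raddf_sum /=.
under eq_bigr => j _ do rewrite comp_mpolyZ lin_substXU scaler_sumr.
rewrite exchange_big /=.
under eq_bigr => l _ do rewrite (eq_bigr _ (fun j _ => scalerA _ _ _)) -scaler_suml.
have entry l : \sum_(j < N) A i j * invmx A j l = (A *m invmx A) i l by rewrite mxE.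
under eq_bigr => l _ do rewrite entry mulmxV // mxE.
rewrite (bigD1 i) //= eqxx scale1r big1 ?addr0 // => l /negbTE.
by rewrite eq_sym => ->; rewrite scale0r.
Qed.

Lemma mderiv_lin_subst A v p :
  (p \mPo lin_subst A)^`M(v) = \sum_(i < N) A i v *: (p^`M(i) \mPo lin_subst A).
Proof.
have delta (c : 'I_N -> k) u :
    \sum_(l < N) c l *: ((l == u)%:R)%:MP = (c u)%:MP :> {mpoly k[N]}.
  rewrite (bigD1 u) //= eqxx big1 => [|l /negbTE ->]; last by rewrite mpolyC0 scaler0.
  by rewrite mpolyC1 addr0 -mul_mpolyC mulr1.
elim/mpoly_ring_ind: p => [c|j|p q IHp IHq|p q IHp IHq].
- rewrite comp_mpolyC !mderivC big1 // => i _.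
  by rewrite mderivC comp_mpoly0 scaler0.
- rewrite lin_substXU raddf_sum /=.
  under eq_bigr => l _ do rewrite mderivZ mderivXU.
  under [RHS]eq_bigr => i _ do rewrite mderivXU comp_mpolyC eq_sym.
  by rewrite !delta.
- rewrite comp_mpolyD mderivD IHp IHq -big_split /=.
  by apply: eq_bigr => i _; rewrite mderivD comp_mpolyD scalerDr.
- rewrite rmorphM /= mderivM IHp IHq mulr_suml mulr_sumr -big_split /=.
  apply: eq_bigr => i _; rewrite mderivM comp_mpolyD !rmorphM /= scalerDr.
  by rewrite scalerAl scalerAr.
Qed.

Lemma mderiv2_lin_subst A v w p :
  (p \mPo lin_subst A)^`M(v)^`M(w) =
  (\sum_(i < N) \sum_(l < N) (A i v * A l w) *: p^`M(i)^`M(l)) \mPo lin_subst A.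
Proof.
rewrite mderiv_lin_subst !raddf_sum /=; apply: eq_bigr => i _.
rewrite mderivZ mderiv_lin_subst scaler_sumr raddf_sum /=; apply: eq_bigr => l _.
by rewrite comp_mpolyZ scalerA.
Qed.

Lemma meval0_mcoeff p : p.@[fun=> 0] = p@_0%MM.
Proof.
elim/mpolyind: p => [|c m p _ _ IHp]; first by rewrite meval0 mcoeff0.
rewrite mevalD mevalZ mevalX mcoeffD mcoeffZ mcoeffX IHp; congr (_ * _ + _).
have [->|nz_m] := eqVneq m 0%MM; first by rewrite big1 // => i _; rewrite mnm0E.
have /existsP[i mi] : [exists i, m i != 0%N].
  apply: contraR nz_m => /existsPn m0; apply/eqP/mnmP => i.
  by rewrite mnm0E; apply/eqP/negPn.
by rewrite (bigD1 i) //= expr0n (negbTE mi) mul0r.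
Qed.

Lemma mcoeff0_lin_subst A p : (p \mPo lin_subst A)@_0%MM = p@_0%MM.
Proof.
rewrite -!meval0_mcoeff comp_mpoly_meval; apply: meval_eq => i.
rewrite tnth_mktuple raddf_sum big1 // => j _ /=.
by rewrite mevalZ mevalXU mulr0.
Qed.

Definition hessian_coef p (mu : 'X_{1..N}) : 'M[k]_N :=
  \matrix_(i, j) (p^`M(i)^`M(j))@_mu.

Lemma tr_hessian_coef p mu : (hessian_coef p mu)^T = hessian_coef p mu.
Proof. by apply/matrixP => i j; rewrite !mxE mderiv_comm. Qed.

Lemma hessian_coefE p mu i j :
  hessian_coef p mu i j = p@_(mu + U_(j) + U_(i)) *+ ((mu + U_(j))%MM i).+1 *+ (mu j).+1.
Proof. by rewrite mxE !mcoeff_mderiv. Qed.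

Lemma mderiv2_lin_subst_eq0 A p v w mu : A \in unitmx ->
  (p \mPo lin_subst A)^`M(v)^`M(w) = 0 -> (A^T *m hessian_coef p mu *m A) v w = 0.
Proof.
move=> uA; rewrite mderiv2_lin_subst => /(congr1 (comp_mpoly (lin_subst (invmx A)))).
rewrite lin_substK // comp_mpoly0 => /(congr1 (mcoeff mu)); rewrite mcoeff0 => <-.
rewrite raddf_sum /=; under eq_bigr => i _ do rewrite raddf_sum /=.
rewrite exchange_big mxE; apply: eq_bigr => l _.
rewrite mxE mulr_suml; apply: eq_bigr => i _.
by rewrite mcoeffZ !mxE mulrAC.
Qed.

Definition hessian_centralizes p (P : 'M[k]_N) :=
  forall mu, P^T *m hessian_coef p mu = hessian_coef p mu *m P.

End LinearSubstitution.

Section DiagonalProjection.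
Variables (R : comUnitRingType) (N : nat).
Implicit Types (G H A : 'M[R]_N) (V : {set 'I_N}).

Definition diag_set_mx V : 'M[R]_N := diag_mx (\row_j (j \in V)%:R).

Lemma diag_set_mx_commute V G : G^T = G ->
  (forall v w, v \in V -> w \notin V -> G v w = 0) ->
  diag_set_mx V *m G = G *m diag_set_mx V.
Proof.
move=> sym_G G0; apply/matrixP => i j; rewrite mul_diag_mx mul_mx_diag !mxE.
case: (boolP (i \in V)) => iV; case: (boolP (j \in V)) => jV /=.
- by rewrite mul1r mulr1.
- by rewrite G0 ?mulr0.
- by rewrite -sym_G mxE G0 ?mul0r.
- by rewrite mul0r mulr0.
Qed.

Lemma conj_commute_tr A H D : A \in unitmx -> D^T = D ->
  D *m (A^T *m H *m A) = (A^T *m H *m A) *m D ->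
  (A *m D *m invmx A)^T *m H = H *m (A *m D *m invmx A).
Proof.
move=> uA sym_D /(congr1 (fun M => (invmx A)^T *m M *m invmx A)) /=.
have trAV : (invmx A)^T *m A^T = 1%:M by rewrite -trmx_mul mulmxV ?trmx1.
rewrite -!mulmxA mulmxV // mulmx1 [X in _ = X]mulmxA trAV mul1mx.
by rewrite !trmx_mul sym_D -!mulmxA.
Qed.

Lemma conj_diag_set_mx_nonscalar A V v w : A \in unitmx -> v \in V -> w \notin V ->
  ~~ is_scalar_mx (A *m diag_set_mx V *m invmx A).
Proof.
move=> uA vV wV; apply/is_scalar_mxP => -[c].
move/(congr1 (fun M => invmx A *m M *m A)).
rewrite !mulmxA mulVmx // mul1mx -mulmxA mulVmx // mulmx1 mul_mx_scalar.
rewrite -scalemxAl mulVmx // scalemx1 => /matrixP E.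
have := E v v; have := E w w; rewrite !mxE !eqxx vV (negbTE wV) /= !mulr1n => <-.
by move/eqP; rewrite oner_eq0.
Qed.

End DiagonalProjection.

Arguments diag_set_mx {R N} V.

Section DirectSum.
Variables (k : fieldType) (N : nat).
Implicit Types (p f g : {mpoly k[N]}) (V : {set 'I_N}).

Lemma only_vars_mderiv V p w : only_vars V p -> w \notin V -> p^`M(w) = 0.
Proof.
move=> Vp wV; apply/mpolyP => m; rewrite mcoeff_mderiv mcoeff0.
have [/Vp/(_ w wV)|] := boolP ((m + U_(w))%MM \in msupp p).
  by rewrite mnmDE mnm1E eqxx addn1.
by move/memN_msupp_eq0 ->; rewrite mul0rn.
Qed.

Lemma mpoly_const p : {in msupp p, forall m, m = 0%MM} -> p = (p@_0%MM)%:MP.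
Proof.
move=> supp0; apply/mpolyP => m; rewrite mcoeffC.
have [->|nz_m] := eqVneq m 0%MM; first by rewrite mulr1.
by rewrite mulr0 memN_msupp_eq0 //; apply: contra nz_m => /supp0 ->.
Qed.

Lemma only_vars_set0 p : only_vars set0 p -> p = (p@_0%MM)%:MP.
Proof.
move=> p0; apply: mpoly_const => m /p0 m0; apply/mnmP => i.
by rewrite mnm0E m0 ?inE.
Qed.

Lemma homog_mcoeff0 p : p \is homog mdeg -> p@_0%MM != 0 -> p = (p@_0%MM)%:MP.
Proof.
case/homogP => d /dhomog_mf hom_p p0; apply: mpoly_const => m p_m.
have : mdeg m = mdeg (0%MM : 'X_{1..N}).
  by rewrite (hom_p m p_m); symmetry; apply: hom_p; rewrite mcoeff_msupp.
by rewrite mdeg0 => /eqP; rewrite mdeg_eq0 => /eqP.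
Qed.

Lemma direct_sum_vars_neq0 g f1 f2 V : g = f1 + f2 -> g@_0%MM = 0 -> g != 0 ->
  f1 != 0 -> f2 \is homog mdeg -> only_vars V f1 -> V != set0.
Proof.
move=> def_g g0 nz_g nz_f1 hom_f2 Vf1; apply: contraNneq nz_g => V0.
rewrite V0 in Vf1; have def_f1 := only_vars_set0 Vf1.
have f2_0 : f2@_0%MM = - f1@_0%MM.
  by apply/eqP; rewrite -addr_eq0 addrC -mcoeffD -def_g g0.
have nz_f2_0 : f2@_0%MM != 0.
  by rewrite f2_0 oppr_eq0; apply: contraNneq nz_f1 => f1_0; rewrite def_f1 f1_0.
by rewrite def_g def_f1 (homog_mcoeff0 hom_f2) // f2_0 -mpolyCD subrr.
Qed.

Lemma direct_sum_mderiv2 V f1 f2 v w : only_vars V f1 -> only_vars (~: V) f2 ->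
  v \in V -> w \notin V -> (f1 + f2)^`M(v)^`M(w) = 0.
Proof.
move=> Vf1 Vf2 vV wV; rewrite mderivD mderivD.
rewrite mderiv_comm (only_vars_mderiv Vf1 wV) mderiv0 add0r.
by rewrite (only_vars_mderiv Vf2) ?mderiv0 // inE negbK.
Qed.

Theorem direct_sum_centralizer f : f@_0%MM = 0 -> f != 0 -> is_direct_sum f ->
  exists2 P, hessian_centralizes f P & ~~ is_scalar_mx P.
Proof.
move=> f0 nz_f [A [uA [f1 [f2 [V [nz_f1 [nz_f2 [hom_f1 [hom_f2 [Vf1 [Vf2 def_g]]]]]]]]]]].
have g0 : (f \mPo lin_subst A)@_0%MM = 0 by rewrite mcoeff0_lin_subst.
have nz_g : f \mPo lin_subst A != 0.
  by apply: contraNneq nz_f => g_0; rewrite -(lin_substK uA f) /= g_0 comp_mpoly0.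
have /set0Pn[v vV] := direct_sum_vars_neq0 def_g g0 nz_g nz_f1 hom_f2 Vf1.
have /set0Pn[w] : ~: V != set0.
  by rewrite addrC in def_g; apply: direct_sum_vars_neq0 def_g _ _ nz_f2 hom_f1 Vf2.
rewrite inE => wV; exists (A *m diag_set_mx V *m invmx A).
  move=> mu; apply: conj_commute_tr => //; first by rewrite tr_diag_mx.
  apply: diag_set_mx_commute => [|v' w' v'V w'V].
    by rewrite !trmx_mul trmxK tr_hessian_coef mulmxA.
  by apply: mderiv2_lin_subst_eq0 => //; rewrite def_g (direct_sum_mderiv2 Vf1 Vf2).
exact: conj_diag_set_mx_nonscalar vV wV.
Qed.

End DirectSum.

Lemma exists_avoid2 (T : finType) (x y : T) : (2 < #|T|)%N -> exists2 z, z != x & z != y.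
Proof.
move=> T3; have : (0 < #|~: [set x; y]|)%N.
  rewrite -(ltn_add2l #|[set x; y]|) cardsC addn0 cards2 (leq_ltn_trans _ T3) //.
  by case: (x != y).
by case/card_gt0P => z; rewrite !inE => /norP[]; exists z.
Qed.

Lemma exists_perm2 (T : finType) (x y u v : T) : x != y -> u != v ->
  exists s : {perm T}, s x = u /\ s y = v.
Proof.
move=> ne_xy ne_uv; pose t := tperm x u.
have tx : t x = u by rewrite tpermL.
have ty : t y != u by rewrite -tx (inj_eq perm_inj) eq_sym.
exists (t * tperm (t y) v)%g; rewrite !permM tx tpermL.
by rewrite tpermD // eq_sym.
Qed.

Lemma sum_eq_pred (T : finType) (P : pred T) (x : T) :
  (\sum_(y | P y) (y == x))%N = P x.
Proof.
have [Px|nPx] := boolP (P x).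
  by rewrite (bigD1 x) //= eqxx big1 // => y /andP[_ /negbTE ->].
by rewrite big1 // => y Py; apply/eqP; rewrite eqb0; apply: contraNneq nPx => <-.
Qed.

Section PermForm.
Variables (k : fieldType) (n : nat) (a : 'S_n -> k).
Implicit Types (s : 'S_n) (R : pred 'I_n) (m mu : 'X_{1..n * n}).
Local Notation f := (perm_form a).
Local Notation H mu := (hessian_coef f mu).

Lemma xvar_eq (i j i' j' : 'I_n) : (xvar i j == xvar i' j') = (i == i') && (j == j').
Proof.
apply/eqP/andP => [|[/eqP-> /eqP->] //].
by move/cast_ord_inj/enum_rank_inj => [-> ->].
Qed.

Definition mperm_on s R : 'X_{1..n * n} := (\sum_(r | R r) U_(xvar r (s r)))%MM.
Definition mperm s := mperm_on s predT.
Definition mperm_off s i1 i2 := mperm_on s [pred r | (r != i1) && (r != i2)].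

Definition mrow m r := (\sum_(c < n) m (xvar r c))%N.
Definition mcol m c := (\sum_(r < n) m (xvar r c))%N.

Lemma mrow0 r : mrow 0%MM r = 0%N.
Proof. by rewrite /mrow big1 // => c _; rewrite mnm0E. Qed.

Lemma mcol0 c : mcol 0%MM c = 0%N.
Proof. by rewrite /mcol big1 // => r _; rewrite mnm0E. Qed.

Lemma mrowD m1 m2 r : mrow (m1 + m2)%MM r = (mrow m1 r + mrow m2 r)%N.
Proof. by rewrite /mrow -big_split; apply: eq_bigr => c _; rewrite mnmDE. Qed.

Lemma mcolD m1 m2 c : mcol (m1 + m2)%MM c = (mcol m1 c + mcol m2 c)%N.
Proof. by rewrite /mcol -big_split; apply: eq_bigr => r _; rewrite mnmDE. Qed.

Lemma mrowU i j r : mrow U_(xvar i j) r = (i == r).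
Proof.
rewrite /mrow; under eq_bigr => c _ do rewrite mnm1E xvar_eq.
have [_|_] := eqVneq i r; last by rewrite big1.
by under eq_bigr => c _ do rewrite /= eq_sym; rewrite (sum_eq_pred predT).
Qed.

Lemma mcolU i j c : mcol U_(xvar i j) c = (j == c).
Proof.
rewrite /mcol; under eq_bigr => r _ do rewrite mnm1E xvar_eq.
have [_|_] := eqVneq j c; last by rewrite big1 // => r; rewrite andbF.
by under eq_bigr => r _ do rewrite andbT eq_sym; rewrite (sum_eq_pred predT).
Qed.

Lemma mrow_mperm_on s R r : mrow (mperm_on s R) r = R r.
Proof.
rewrite /mperm_on (big_morph (mrow^~ r) (fun m1 m2 => mrowD m1 m2 r) (mrow0 r)).
by under eq_bigr => i _ do rewrite mrowU; rewrite sum_eq_pred.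
Qed.

Lemma mcol_mperm_on s R c : mcol (mperm_on s R) c = R (s^-1 c)%g.
Proof.
rewrite /mperm_on (big_morph (mcol^~ c) (fun m1 m2 => mcolD m1 m2 c) (mcol0 c)).
under eq_bigr => i _ do rewrite mcolU -{1}(permKV s c) (inj_eq perm_inj).
by rewrite sum_eq_pred.
Qed.

Lemma mperm_onE s R i j : mperm_on s R (xvar i j) = R i && (s i == j).
Proof.
rewrite mnm_sumE; under eq_bigr => r _ do rewrite mnm1E xvar_eq.
have [Ri|nRi] /= := boolP (R i).
  by rewrite (bigD1 i) //= eqxx big1 ?addn0 // => r /andP[_ /negbTE ->].
by rewrite big1 // => r Rr; case: eqP Rr => // ->; rewrite (negbTE nRi).
Qed.

Lemma mperm_inj : injective mperm.
Proof.
move=> s t eq_st; apply/permP => r; apply/eqP.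
have := mperm_onE t predT r (s r).
by rewrite -[mperm_on t _]eq_st mperm_onE eqxx eq_sym; case: (s r == t r).
Qed.

Lemma perm_formE : f = \sum_s a s *: 'X_[mperm s].
Proof.
apply: eq_bigr => s _; congr (_ *: _).
by rewrite /mperm /mperm_on (big_morph _ (@mpolyXD _ _) (@mpolyX0 _ _)).
Qed.

Lemma mcoeff_perm_form m : f@_m = \sum_s a s * (mperm s == m)%:R.
Proof.
by rewrite perm_formE raddf_sum; apply: eq_bigr => s _; rewrite /= mcoeffZ mcoeffX.
Qed.

Lemma mcoeff_perm_form_mperm s : f@_(mperm s) = a s.
Proof.
rewrite mcoeff_perm_form (bigD1 s) //= eqxx mulr1 big1 ?addr0 // => t ne_ts.
by rewrite (inj_eq mperm_inj) (negbTE ne_ts) mulr0.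
Qed.

Lemma mcoeff_perm_form_row m r : mrow m r != 1%N -> f@_m = 0.
Proof.
move=> row_m; rewrite mcoeff_perm_form big1 // => s _.
have [def_m|_] := eqVneq (mperm s) m; last by rewrite mulr0.
by rewrite -def_m mrow_mperm_on in row_m.
Qed.

Lemma mcoeff_perm_form_col m c : mcol m c != 1%N -> f@_m = 0.
Proof.
move=> col_m; rewrite mcoeff_perm_form big1 // => s _.
have [def_m|_] := eqVneq (mperm s) m; last by rewrite mulr0.
by rewrite -def_m mcol_mperm_on in col_m.
Qed.

Lemma mcoeff0_perm_form : (0 < n)%N -> f@_0%MM = 0.
Proof. by move=> n_gt0; apply: (mcoeff_perm_form_row (r := Ordinal n_gt0)); rewrite mrow0. Qed.

Lemma perm_form_neq0 : (forall s, a s != 0) -> f != 0.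
Proof.
move=> a_neq0; have := a_neq0 1%g; rewrite -mcoeff_perm_form_mperm.
by apply: contraNneq => ->; rewrite mcoeff0.
Qed.

Lemma hessian_perm_form_row mu P L r :
  mrow (mu + U_(L) + U_(P))%MM r != 1%N -> H mu P L = 0.
Proof. by move=> row; rewrite hessian_coefE (mcoeff_perm_form_row row) !mul0rn. Qed.

Lemma hessian_perm_form_col mu P L c :
  mcol (mu + U_(L) + U_(P))%MM c != 1%N -> H mu P L = 0.
Proof. by move=> col; rewrite hessian_coefE (mcoeff_perm_form_col col) !mul0rn. Qed.

Lemma hessian_perm_form_row_used mu i j C : (0 < mrow mu i)%N -> H mu (xvar i j) C = 0.
Proof.
move=> row; apply: (hessian_perm_form_row (r := i)).
by rewrite !mrowD mrowU eqxx addn1 eqSS -lt0n (leq_trans row) ?leq_addr.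
Qed.

Lemma hessian_perm_form_col_used mu i j C : (0 < mcol mu j)%N -> H mu (xvar i j) C = 0.
Proof.
move=> col; apply: (hessian_perm_form_col (c := j)).
by rewrite !mcolD mcolU eqxx addn1 eqSS -lt0n (leq_trans col) ?leq_addr.
Qed.

Lemma mperm_off_split s i1 i2 : i1 != i2 ->
  (mperm_off s i1 i2 + U_(xvar i2 (s i2)) + U_(xvar i1 (s i1)))%MM = mperm s.
Proof.
move=> ne_i12; rewrite /mperm /mperm_on (bigD1 i1) //= (bigD1 i2) 1?eq_sym //=.
by rewrite addmC; congr (_ + _)%MM; rewrite addmC.
Qed.

Lemma hessian_perm_form_off s i1 i2 : i1 != i2 ->
  H (mperm_off s i1 i2) (xvar i1 (s i1)) (xvar i2 (s i2)) = a s.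
Proof.
move=> ne_i12; rewrite hessian_coefE mperm_off_split // mcoeff_perm_form_mperm.
by rewrite mnmDE !mperm_onE mnm1E xvar_eq /= [i2 == i1]eq_sym (negbTE ne_i12) !eqxx andbF.
Qed.

Lemma sum_hessian_perm_form_off (w : 'I_(n * n) -> k) s i1 i2 : i1 != i2 ->
  \sum_Q w Q * H (mperm_off s i1 i2) Q (xvar i2 (s i2)) = w (xvar i1 (s i1)) * a s.
Proof.
move=> ne_i12; rewrite (bigD1 (xvar i1 (s i1))) //= hessian_perm_form_off //.
rewrite big1 ?addr0 // => Q; case/mxvec_indexP: Q => i j; rewrite -/(xvar i j).
rewrite xvar_eq negb_and => ne_Q; apply/eqP; rewrite mulf_eq0; apply/orP; right.
have ne_s12 : s i2 != s i1 by rewrite (inj_eq perm_inj) eq_sym.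
apply/eqP; have [eq_i | ne_i] := eqVneq i i1.
  rewrite eq_i eqxx /= in ne_Q; apply: (hessian_perm_form_col (c := s i1)).
  by rewrite !mcolD mcol_mperm_on !mcolU permK /= eqxx (negbTE ne_s12) (negbTE ne_Q).
apply: (hessian_perm_form_row (r := i1)).
by rewrite !mrowD mrow_mperm_on !mrowU /= eqxx (negbTE ne_i) [i2 == i1]eq_sym (negbTE ne_i12).
Qed.

Section Centralizer.
Variable P : 'M[k]_(n * n).
Hypotheses (n_gt2 : (2 < n)%N) (a_neq0 : forall s, a s != 0).
Hypothesis P_centralizes : hessian_centralizes f P.

Lemma centralizer_entry mu I L :
  \sum_Q P Q I * H mu Q L = \sum_C H mu I C * P C L.
Proof.
have /matrixP/(_ I L) := P_centralizes mu; rewrite !mxE => <-.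
by apply: eq_bigr => Q _; rewrite [P^T _ _]mxE.
Qed.

Let avoid2 (x y : 'I_n) : exists2 z, z != x & z != y.
Proof. by apply: exists_avoid2; rewrite card_ord. Qed.

Lemma centralizer_offdiag Q I : Q != I -> P Q I = 0.
Proof.
case/mxvec_indexP: Q => i0 j0; case/mxvec_indexP: I => i j.
rewrite -/(xvar i0 j0) -/(xvar i j) xvar_eq => ne_QI.
suff [s [i2 [ne_i02 s_i0 H0]]] : exists s i2, [/\ i0 != i2, s i0 = j0 &
    forall C, H (mperm_off s i0 i2) (xvar i j) C = 0].
  have := centralizer_entry (mperm_off s i0 i2) (xvar i j) (xvar i2 (s i2)).
  rewrite sum_hessian_perm_form_off // big1 => [|C _]; last by rewrite H0 mul0r.
  by rewrite s_i0 => /eqP; rewrite mulf_eq0 (negbTE (a_neq0 s)) orbF => /eqP.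
move: ne_QI; have [<-|ne_i] := eqVneq i0 i => /= [ne_j|_].
  have [i2 ne_i2 _] := avoid2 i0 i0; have [l ne_l0 ne_l] := avoid2 j0 j.
  have [s [s_i0 s_i2]] : exists s : 'S_n, s i0 = j0 /\ s i2 = l.
    by apply: exists_perm2; rewrite eq_sym.
  exists s, i2; split => // [|C]; first by rewrite eq_sym.
  apply: hessian_perm_form_col_used; rewrite mcol_mperm_on /=.
  by rewrite !(canF_eq (permKV s)) s_i0 s_i2 ![j == _]eq_sym ne_j ne_l.
have [i2 ne_i20 ne_i2] := avoid2 i0 i; have [l ne_l _] := avoid2 j0 j0.
have [s [s_i0 s_i2]] : exists s : 'S_n, s i0 = j0 /\ s i2 = l.
  by apply: exists_perm2; rewrite eq_sym.
exists s, i2; split => // [|C]; first by rewrite eq_sym.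
apply: hessian_perm_form_row_used; rewrite mrow_mperm_on /=.
by rewrite ![i == _]eq_sym ne_i ne_i2.
Qed.

Lemma centralizer_diag_eq i j i2 j2 : i != i2 -> j != j2 ->
  P (xvar i j) (xvar i j) = P (xvar i2 j2) (xvar i2 j2).
Proof.
move=> ne_i ne_j; have [s [s_i s_i2]] := exists_perm2 ne_i ne_j.
have := hessian_perm_form_off s ne_i; rewrite s_i s_i2 => H_off.
have := sum_hessian_perm_form_off (fun Q => P Q (xvar i j)) s ne_i.
rewrite s_i s_i2 centralizer_entry (bigD1 (xvar i2 j2)) //= H_off.
rewrite big1 ?addr0 => [|C ne_C]; last by rewrite centralizer_offdiag ?mulr0.
by rewrite mulrC => /(mulIf (a_neq0 s)) ->.
Qed.

Lemma perm_form_centralizer_scalar : is_scalar_mx P.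
Proof.
pose i0 := Ordinal (ltn_trans (isT : (0 < 2)%N) n_gt2).
apply/is_scalar_mxP; exists (P (xvar i0 i0) (xvar i0 i0)); apply/matrixP => Q I.
rewrite mxE; have [<-|ne_QI] := eqVneq Q I; last by rewrite mulr0n centralizer_offdiag.
rewrite mulr1n; case/mxvec_indexP: Q => i j; rewrite -/(xvar i j).
have [r ne_ri ne_ri0] := avoid2 i i0; have [c ne_cj ne_ci0] := avoid2 j i0.
by rewrite (@centralizer_diag_eq i j r c) 1?eq_sym // (@centralizer_diag_eq r c i0 i0).
Qed.

End Centralizer.

End PermForm.

Theorem corollary5p7 (k : fieldType) (n : nat) (a : 'S_n -> k) :
  (3 <= n)%N ->
  (exists x : k, x != 0 /\ x != 1) ->
  (forall s : 'S_n, a s != 0) ->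
  ~ is_direct_sum (perm_form a).
Proof.
(* The argument does not need the hypothesis that k is not F_2. *)
move=> n_gt2 _ a_neq0 /direct_sum_centralizer[||P P_centralizes].
- exact: mcoeff0_perm_form (ltnW (ltnW n_gt2)).
- exact: perm_form_neq0.
by rewrite (perm_form_centralizer_scalar n_gt2 a_neq0 P_centralizes).
Qed.
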